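(* Let $R=\mathbb{R}[t]/(t^2)$ and let $A$ be the evolution algebra over $R$ with basis $\{x_i:i\in\mathbb{N}\}$ and multiplication determined by $x_ix_i=tx_i+x_{i+1}$ and $x_ix_j=0$ for $i\ne j$. Then $A$ is nil but not nilpotent.
   Context: An evolution algebra over a commutative ring $R$ is a free $R$-module with basis $\{x_i\}$ and $R$-bilinear multiplication determined by $x_ix_j=0$ for $i\ne j$ and $x_i^2=\sum_k c_{ki}x_k$. Principal powers: $a^1=a$, $a^n=a^{n-1}a$; $A^1=A$, $A^n=A^{n-1}A$ ($R$-span of products). $A$ is nil if every element has some principal power equal to $0$; nilpotent if $A^n=(0)$ for some $n$. *)

From Stdlib Require Import Reals.
Open Scope R_scope.

(* An element (a, b) represents a + b t, with t^2 = 0. *)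
Definition D : Type := (R * R)%type.
Definition D0 : D := (0, 0).
Definition D1 : D := (1, 0).
Definition Dt : D := (0, 1).
Definition Dadd (x y : D) : D := (fst x + fst y, snd x + snd y).
Definition Dmul (x y : D) : D :=
  (fst x * fst y, fst x * snd y + snd x * fst y).

(* An element is its coefficient function, required to be finitely supported.
   Equality of elements is pointwise equality of coefficients. *)
Definition Elt : Type := nat -> D.
Definition finsupp (f : Elt) : Prop := exists N : nat, forall i, (N <= i)%nat -> f i = D0.
Definition eqA (f g : Elt) : Prop := forall i, f i = g i.
Definition zeroA : Elt := fun _ => D0.
Definition addA (f g : Elt) : Elt := fun i => Dadd (f i) (g i).
Definition scaleA (r : D) (f : Elt) : Elt := fun i => Dmul r (f i).

(* The evolution-algebra product for x_i x_i = t x_i + x_(i+1), x_i x_j = 0 (i<>j):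
   (sum_i f_i x_i)(sum_j g_j x_j) = sum_i f_i g_i (t x_i + x_(i+1)),
   whose coefficient at x_k is  t f_k g_k + f_(k-1) g_(k-1)  (second term absent for k = 0). *)
Definition mulA (f g : Elt) : Elt := fun k =>
  Dadd (Dmul Dt (Dmul (f k) (g k)))
       (match k with O => D0 | S j => Dmul (f j) (g j) end).

(* Principal powers: a^1 = a, a^(n+1) = a^n a (ppow a n = a^(n+1)). *)
Fixpoint ppow (a : Elt) (n : nat) : Elt :=
  match n with O => a | S m => mulA (ppow a m) a end.

(* Powers of the algebra: Apow n x  <->  x is an element of A^n.
   A^1 = A; A^(n+1) = D-span of { a b : a in A^n, b in A }. *)
Inductive Apow : nat -> Elt -> Prop :=
| Apow_one : forall x, finsupp x -> Apow 1 x
| Apow_mul : forall n a b, Apow n a -> finsupp b -> Apow (S n) (mulA a b)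
| Apow_zero : forall n, (1 <= n)%nat -> Apow n zeroA
| Apow_add : forall n x y, (2 <= n)%nat -> Apow n x -> Apow n y -> Apow n (addA x y)
| Apow_scale : forall n r x, (2 <= n)%nat -> Apow n x -> Apow n (scaleA r x)
| Apow_ext : forall n x y, Apow n x -> eqA x y -> Apow n y.

Definition is_nil : Prop :=
  forall a : Elt, finsupp a -> exists n : nat, eqA (ppow a n) zeroA.

Definition is_nilpotent : Prop :=
  exists n : nat, (1 <= n)%nat /\ forall x, Apow n x -> eqA x zeroA.

(* Write a = sum_i (a_i + a'_i t) x_i.  In a product f g the real part of the
   coefficient at x_(k+1) is f_k g_k: real parts are shifted up by one index and
   never created at x_0.  Hence if a is supported below N, the real parts of the
   principal power a^(n+1) vanish below n, while the support stays below N + 1;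
   after N + 1 steps all real parts are gone, and from then on the t-parts are
   shifted up in the same way, so a^(2N+2) = 0.  On the other hand the
   left-normed products x_0 x_0 x_1 ... x_(m-1) have coefficient 1 at x_m, and
   the m-th of them lies in A^(m+1), so no power of A vanishes. *)

From Pilot Require Import Defs.
From Stdlib Require Import Reals Lra Lia.
Open Scope R_scope.

Lemma fst_mulA_0 f g : fst (mulA f g 0%nat) = 0.
Proof. unfold mulA, Defs.Dadd, Dmul, Dt, D0; cbn; ring. Qed.

Lemma fst_mulA_S f g k : fst (mulA f g (S k)) = fst (f k) * fst (g k).
Proof. unfold mulA, Defs.Dadd, Dmul, Dt, D0; cbn; ring. Qed.

Lemma snd_mulA_0 f g : snd (mulA f g 0%nat) = fst (f 0%nat) * fst (g 0%nat).
Proof. unfold mulA, Defs.Dadd, Dmul, Dt, D0; cbn; ring. Qed.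

Lemma snd_mulA_S f g k : snd (mulA f g (S k)) =
  fst (f (S k)) * fst (g (S k)) + (fst (f k) * snd (g k) + snd (f k) * fst (g k)).
Proof. unfold mulA, Defs.Dadd, Dmul, Dt, D0; cbn; ring. Qed.

Lemma D_eq0 (x : D) : fst x = 0 -> snd x = 0 -> x = D0.
Proof. destruct x; simpl; intros; subst; reflexivity. Qed.

Section BoundedSupport.

Variables (a : Elt) (N : nat).
Hypothesis a_supp : forall i, (N <= i)%nat -> a i = D0.

Lemma ppow_vanish_above n k : (N < k)%nat -> ppow a n k = D0.
Proof.
  revert k; induction n as [|n IHn]; intros k Hk; simpl.
  - apply a_supp; lia.
  - destruct k as [|k]; [lia|].
    apply D_eq0.
    + rewrite fst_mulA_S, (a_supp k) by lia. simpl; ring.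
    + rewrite snd_mulA_S, (a_supp k), (a_supp (S k)) by lia. simpl; ring.
Qed.

Lemma fst_ppow_vanish_below n k : (k < n)%nat -> fst (ppow a n k) = 0.
Proof.
  revert k; induction n as [|n IHn]; intros k Hk; [lia|].
  change (ppow a (S n)) with (mulA (ppow a n) a).
  destruct k as [|k]; [apply fst_mulA_0|].
  rewrite fst_mulA_S, IHn by lia; ring.
Qed.

Lemma snd_ppow_vanish_below m k : (k < m)%nat -> snd (ppow a (S N + m) k) = 0.
Proof.
  revert k; induction m as [|m IHm]; intros k Hk; [lia|].
  rewrite Nat.add_succ_r.
  change (ppow a (S (S N + m))) with (mulA (ppow a (S N + m)) a).
  destruct k as [|k].
  - rewrite snd_mulA_0, fst_ppow_vanish_below by lia; ring.
  - rewrite snd_mulA_S, (fst_ppow_vanish_below _ (S k)), (fst_ppow_vanish_below _ k),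
      IHm by lia; ring.
Qed.

Lemma ppow_bounded_support_eq0 : eqA (ppow a (S N + S N)) zeroA.
Proof.
  intro k; unfold zeroA.
  destruct (Nat.lt_ge_cases N k).
  - apply ppow_vanish_above; lia.
  - apply D_eq0; [apply fst_ppow_vanish_below | apply snd_ppow_vanish_below]; lia.
Qed.

End BoundedSupport.

Lemma evolution_algebra_nil : is_nil.
Proof.
  intros a [N a_supp].
  exists (S N + S N)%nat.
  exact (ppow_bounded_support_eq0 a N a_supp).
Qed.

Definition basis (i : nat) : Elt := fun k => if Nat.eqb k i then D1 else D0.

Lemma basis_finsupp i : finsupp (basis i).
Proof.
  exists (S i); intros k Hk; unfold basis.
  destruct (Nat.eqb_spec k i); [lia | reflexivity].
Qed.

Lemma basis_diag i : basis i i = D1.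
Proof. unfold basis; rewrite Nat.eqb_refl; reflexivity. Qed.

Lemma basis_S i : basis i (S i) = D0.
Proof. unfold basis; destruct (Nat.eqb_spec (S i) i); [lia | reflexivity]. Qed.

Fixpoint chain (m : nat) : Elt :=
  match m with O => basis 0 | S m => mulA (chain m) (basis m) end.

Lemma Apow_chain m : Apow (S m) (chain m).
Proof.
  induction m as [|m IHm]; simpl.
  - apply Apow_one, basis_finsupp.
  - apply Apow_mul; [exact IHm | apply basis_finsupp].
Qed.

Lemma chain_diag m : chain m m = D1.
Proof.
  induction m as [|m IHm]; simpl.
  - apply basis_diag.
  - unfold mulA; rewrite IHm, basis_diag, basis_S.
    unfold Defs.Dadd, Dmul, Dt, D0, D1; simpl; f_equal; ring.
Qed.

Lemma evolution_algebra_not_nilpotent : ~ is_nilpotent.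
Proof.
  intros [[|m] [Hm Apow_eq0]]; [lia|].
  specialize (Apow_eq0 (chain m) (Apow_chain m) m).
  rewrite chain_diag in Apow_eq0.
  unfold zeroA, D1, D0 in Apow_eq0; injection Apow_eq0; lra.
Qed.

Theorem mainTheorem10 : is_nil /\ ~ is_nilpotent.
Proof. exact (conj evolution_algebra_nil evolution_algebra_not_nilpotent). Qed.
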